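(* Let $\mathfrak{g}$ be a four-dimensional real Lie algebra, oriented by a volume form $\mu\in\Lambda^4(\mathfrak{g}^* )$, and assume $\mathfrak{g}$ admits a positively oriented symplectic form, i.e. a closed 2-form $\omega$ with $\omega\wedge\omega=c\,\mu$ for some $c>0$. Then $\mathfrak{g}$ satisfies the tame-compatible property if and only if the space $B_2$ of boundary 2-vectors is negative semi-definite for the bilinear form $\Phi_\mu(u,v)=\mu(u\wedge v)$ on $\Lambda^2(\mathfrak{g})$, that is, if and only if $\mu(u\wedge u)\le 0$ for all $u\in B_2$.
   Context: The Chevalley–Eilenberg differential $d$ on forms on a Lie algebra $\mathfrak{g}$ is defined on 1-forms by $d\alpha(u,v)=-\alpha([u,v])$ and extended to all forms by the Leibniz rule. $\mathcal{Z}^2$ denotes the space of closed 2-forms ($d\alpha=0$). The space of boundary 2-vectors $B_2\subset\Lambda^2(\mathfrak{g})$ is the annihilator of $\mathcal{Z}^2$: $B_2=\{u\in\Lambda^2(\mathfrak{g}) : \alpha(u)=0 \text{ for all } \alpha\in\mathcal{Z}^2\}$. A symplectic form on $\mathfrak{g}$ is a closed non-degenerate 2-form. An almost complex structure on $\mathfrak{g}$ is a linear map $J:\mathfrak{g}\to\mathfrak{g}$ with $J^2=-1$; it induces the given orientation if for some (equivalently any) basis of the form $(v_1,Jv_1,v_2,Jv_2)$ one has $\mu(v_1,Jv_1,v_2,Jv_2)>0$. $J$ is tamed by a symplectic form $\omega$ if $\omega(u,Ju)>0$ for all $u\neq0$; $J$ is compatible with $\omega$ if it is tamed by $\omega$ and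 $\omega(Jv,Jw)=\omega(v,w)$ for all $v,w$. An oriented Lie algebra $\mathfrak{g}$ satisfies the tame-compatible property if every almost complex structure $J$ on $\mathfrak{g}$ inducing the given orientation which is tamed by some symplectic form is also compatible with some symplectic form. *)

(* A 4-dimensional real Lie algebra is modelled as R^4 (row
   vectors 'rV[R]_4) with bracket given by structure constants c, over an
   arbitrary real closed field R. *)
From HB Require Import structures.
From mathcomp Require Import all_boot all_order all_algebra all_fingroup.
Set Implicit Arguments. Unset Strict Implicit. Unset Printing Implicit Defensive.
Import Order.TTheory GRing.Theory Num.Theory.
Local Open Scope ring_scope.

Section Defs.
Variable R : rcfType.
Notation vec := 'rV[R]_4.

Definition lie_br (c : 'I_4 -> 'I_4 -> 'I_4 -> R) (x y : vec) : vec :=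
  \row_k \sum_i \sum_j x 0 i * y 0 j * c i j k.

Definition is_lie (c : 'I_4 -> 'I_4 -> 'I_4 -> R) : Prop :=
  (forall x y, lie_br c x y = - lie_br c y x) /\
  (forall x y z, lie_br c x (lie_br c y z) + lie_br c y (lie_br c z x)
                 + lie_br c z (lie_br c x y) = 0).

Definition is_2form (A : 'M[R]_4) : Prop := A^T = - A.
Definition form2 (A : 'M[R]_4) (x y : vec) : R :=
  \sum_i \sum_j x 0 i * y 0 j * A i j.

Definition d2 c (A : 'M[R]_4) (x y z : vec) : R :=
  - form2 A (lie_br c x y) z + form2 A (lie_br c x z) y
  - form2 A (lie_br c y z) x.

Definition closed2 c (A : 'M[R]_4) : Prop :=
  is_2form A /\ forall x y z, d2 c A x y z = 0.

Definition nondeg (A : 'M[R]_4) : Prop :=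
  forall x, (forall y, form2 A x y = 0) -> x = 0.

Definition symplectic c (A : 'M[R]_4) : Prop := closed2 c A /\ nondeg A.

(* 4-forms evaluated on a 4-tuple of vectors; volume form mu = m e^1234 *)
Definition vol (m : R) (v : 'I_4 -> vec) : R :=
  m * \det (\matrix_(i, j) v i 0 j).

Definition wedge22 (A B : 'M[R]_4) (v : 'I_4 -> vec) : R :=
  4%:R^-1 * \sum_(s : 'S_4) (-1) ^+ (odd_perm s)
     * form2 A (v (s (inord 0))) (v (s (inord 1)))
     * form2 B (v (s (inord 2))) (v (s (inord 3))).

Definition quad (T : Type) (a b c d : T) (t : 'I_4) : T := nth a [:: a; b; c; d] t.

Definition ebasis (i : 'I_4) : vec := delta_mx 0 i.

(* 2-vectors: skew matrices U, u = sum_{i<j} U_ij e_i /\ e_j *)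
Definition pair2 (A U : 'M[R]_4) : R :=
  \sum_(i : 'I_4) \sum_(j : 'I_4 | (i < j)%N) U i j * A i j.

Definition Phi (m : R) (U V : 'M[R]_4) : R :=
  \sum_(i : 'I_4) \sum_(j : 'I_4 | (i < j)%N) \sum_(k : 'I_4) \sum_(l : 'I_4 | (k < l)%N)
    U i j * V k l * vol m (quad (ebasis i) (ebasis j) (ebasis k) (ebasis l)).

(* boundary 2-vectors: annihilator of closed 2-forms *)
Definition B2 c (U : 'M[R]_4) : Prop :=
  is_2form U /\ forall A, closed2 c A -> pair2 A U = 0.

Definition acs (J : 'M[R]_4) : Prop := J *m J = - 1%:M.

Definition induces_orient (m : R) (J : 'M[R]_4) : Prop :=
  exists v1 v2 : vec,
    let v := quad v1 (v1 *m J) v2 (v2 *m J) in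
    \det (\matrix_(i, j) v i 0 j) != 0 /\ 0 < vol m v.

Definition tamed (W J : 'M[R]_4) : Prop :=
  forall u : vec, u != 0 -> 0 < form2 W u (u *m J).

Definition compatible (W J : 'M[R]_4) : Prop :=
  tamed W J /\ forall v w : vec, form2 W (v *m J) (w *m J) = form2 W v w.

Definition tame_compatible c (m : R) : Prop :=
  forall J, acs J -> induces_orient m J ->
    (exists W, symplectic c W /\ tamed W J) ->
    exists W, symplectic c W /\ compatible W J.

End Defs.

(* Two-forms are skew 4x4 matrices, and the Pfaffian plays the role of the wedge
   square: omega /\ omega = 2 pfaff(omega) e^0123 and Phi_mu(u, u) = 2 m pfaff(u).
   In a basis adapted to J (J e0 = e1, J e2 = e3), the form
   a e^01 + b e^02 + c e^03 + d e^12 + e e^13 + f e^23 is tamed iff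
   (a, f, b + e, c - d) lies in the cone a > 0, (b + e)^2 + (c - d)^2 < 4 a f, and
   it is J-invariant iff b = e and c = -d.

   If a boundary 2-vector u has m pfaff(u) > 0, a multiple beta of its Hodge dual is
   Pfaffian-orthogonal to every closed form and has pfaff(beta) = pfaff(omega).  A
   basis bringing omega + beta and omega - beta to a normal form defines a J tamed by
   omega for which every tamed J-invariant form W has pfaff_polar(W, beta) > 0, so
   no symplectic form is compatible with J.

   Conversely, let J be tamed by omega with no compatible symplectic form.  The
   vectors (a, f, b + e, c - d) of the closed J-invariant forms make up a subspace
   missing the tame cone, hence orthogonal to a nonzero beta of the dual cone.
   Pairing with beta extends to all closed forms by adding g1 (b - e) + g2 (c + d);
   the corresponding 2-vector u is a boundary with
   Phi_mu(u, u) = 2 m det P (beta0 beta1 - beta2^2 - beta3^2 + g1^2 + g2^2).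
   So Phi_mu(u, u) <= 0 forces g1 = g2 = 0, and then beta pairs to zero with the
   coefficients of omega, which lie in the open tame cone: a contradiction. *)

Set Warnings "-notation-overridden,-ambiguous-paths,-notation-incompatible-prefix".
From HB Require Import structures.
From mathcomp Require Import all_boot all_order all_algebra all_fingroup.
From mathcomp Require Import ring lra zify.
From Stdlib Require Import Classical.
Set Implicit Arguments. Unset Strict Implicit. Unset Printing Implicit Defensive.
Import Order.TTheory GRing.Theory Num.Theory.
Local Open Scope ring_scope.

Section Coordinates.
Variable R : rcfType.
Notation vec := 'rV[R]_4.

Lemma ord4_cases (i : 'I_4) :
  [\/ i = inord 0, i = inord 1, i = inord 2 | i = inord 3].
Proof.
case: i => [[|[|[|[|n]]]] Hi] //;
  [apply: Or41 | apply: Or42 | apply: Or43 | apply: Or44]; apply/val_inj; by rewrite /= inordK.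
Qed.

Lemma inord4_eq i j : (i < 4)%N -> (j < 4)%N -> (inord i == inord j :> 'I_4) = (i == j).
Proof.
move=> Hi Hj; apply/eqP/eqP => [H|->//].
by have := congr1 val H; rewrite /= !inordK.
Qed.

Lemma sum4 (F : 'I_4 -> R) :
  \sum_(i < 4) F i = F (inord 0) + F (inord 1) + F (inord 2) + F (inord 3).
Proof.
rewrite !big_ord_recl big_ord0 addr0 !addrA.
by congr (F _ + F _ + F _ + F _); apply/val_inj; rewrite /= inordK.
Qed.

Lemma sum4_cond (P : pred 'I_4) (F : 'I_4 -> R) :
  \sum_(i < 4 | P i) F i = (if P (inord 0) then F (inord 0) else 0)
   + (if P (inord 1) then F (inord 1) else 0) + (if P (inord 2) then F (inord 2) else 0)
   + (if P (inord 3) then F (inord 3) else 0).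
Proof. by rewrite big_mkcond sum4. Qed.

Lemma det_mx4 (f : nat -> nat -> R) : \det (\matrix_(i < 4, j < 4) f i j) =
  f 0 0 * (f 1 1 * f 2 2 * f 3 3 - f 1 1 * f 2 3 * f 3 2 - f 1 2 * f 2 1 * f 3 3
  + f 1 2 * f 2 3 * f 3 1 + f 1 3 * f 2 1 * f 3 2 - f 1 3 * f 2 2 * f 3 1)
  - f 0 1 * (f 1 0 * f 2 2 * f 3 3 - f 1 0 * f 2 3 * f 3 2 - f 1 2 * f 2 0 * f 3 3
  + f 1 2 * f 2 3 * f 3 0 + f 1 3 * f 2 0 * f 3 2 - f 1 3 * f 2 2 * f 3 0)
  + f 0 2 * (f 1 0 * f 2 1 * f 3 3 - f 1 0 * f 2 3 * f 3 1 - f 1 1 * f 2 0 * f 3 3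
  + f 1 1 * f 2 3 * f 3 0 + f 1 3 * f 2 0 * f 3 1 - f 1 3 * f 2 1 * f 3 0)
  - f 0 3 * (f 1 0 * f 2 1 * f 3 2 - f 1 0 * f 2 2 * f 3 1 - f 1 1 * f 2 0 * f 3 2
  + f 1 1 * f 2 2 * f 3 0 + f 1 2 * f 2 0 * f 3 1 - f 1 2 * f 2 1 * f 3 0).
Proof.
have det_mx3 (g : nat -> nat -> R) : \det (\matrix_(i < 3, j < 3) g i j) =
  g 0 0 * g 1 1 * g 2 2 - g 0 0 * g 1 2 * g 2 1 - g 0 1 * g 1 0 * g 2 2
  + g 0 1 * g 1 2 * g 2 0 + g 0 2 * g 1 0 * g 2 1 - g 0 2 * g 1 1 * g 2 0.
  rewrite (expand_det_row _ 0) !big_ord_recl big_ord0 /cofactor.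
  do 3 rewrite (expand_det_row _ 0) !big_ord_recl big_ord0 /cofactor !det_mx11.
  by rewrite !mxE /= /bump /= !expr0 !expr1 !exprS !expr0; ring.
have minor (j : 'I_4) :
  \det (row' 0 (col' j (\matrix_(i < 4, j < 4) f i j))) =
  let g a b := f (bump 0 a) (bump j b) in
  g 0 0 * g 1 1 * g 2 2 - g 0 0 * g 1 2 * g 2 1 - g 0 1 * g 1 0 * g 2 2
  + g 0 1 * g 1 2 * g 2 0 + g 0 2 * g 1 0 * g 2 1 - g 0 2 * g 1 1 * g 2 0.
  rewrite /= -(det_mx3 (fun a b => f (bump 0 a) (bump j b))).
  by congr (\det _); apply/matrixP => a b; rewrite !mxE.
rewrite (expand_det_row _ 0) !big_ord_recl big_ord0 /cofactor !minor.
by rewrite !mxE /= /bump /= !expr0 !expr1 !exprS !expr0; ring.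
Qed.

(* Entries and coordinates addressed by natural numbers, so that [ring] can
   work on concrete positions. *)
Definition en (M : 'M[R]_4) (i j : nat) := M (inord i) (inord j).
Arguments en M i%_N j%_N.
Definition ev (u : vec) (i : nat) := u 0 (inord i).
Arguments ev u i%_N.

Lemma det4 (M : 'M[R]_4) : \det M = \det (\matrix_(i < 4, j < 4) en M i j).
Proof. by congr (\det _); apply/matrixP => i j; rewrite !mxE /en !inord_val. Qed.

Lemma en_mul (A B : 'M[R]_4) i j :
  en (A *m B) i j = en A i 0 * en B 0 j + en A i 1 * en B 1 j + en A i 2 * en B 2 j
    + en A i 3 * en B 3 j.
Proof. by rewrite /en mxE sum4. Qed.

Lemma en_tr (A : 'M[R]_4) i j : en A^T i j = en A j i.
Proof. by rewrite /en mxE. Qed.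

Lemma mx4_entrywise (A B : 'M[R]_4) :
  (forall i j, (i < 4)%N -> (j < 4)%N -> en A i j = en B i j) -> A = B.
Proof.
by move=> H; apply/matrixP => i j; case: (ord4_cases i) => ->; case: (ord4_cases j) => ->; apply: H.
Qed.

Lemma ev_mul (u : vec) (M : 'M[R]_4) i : ev (u *m M) i =
  ev u 0 * en M 0 i + ev u 1 * en M 1 i + ev u 2 * en M 2 i + ev u 3 * en M 3 i.
Proof. by rewrite /ev mxE sum4. Qed.

Lemma evD (x y : vec) i : ev (x + y) i = ev x i + ev y i.
Proof. by rewrite /ev mxE. Qed.

Lemma evZ (x : vec) (t : R) i : ev (t *: x) i = t * ev x i.
Proof. by rewrite /ev mxE. Qed.

Lemma evN (x : vec) i : ev (- x) i = - ev x i.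
Proof. by rewrite /ev mxE. Qed.

Lemma ev_eq0 (u : vec) : ev u 0 = 0 -> ev u 1 = 0 -> ev u 2 = 0 -> ev u 3 = 0 -> u = 0.
Proof.
move=> h0 h1 h2 h3; apply/matrixP => i j; rewrite mxE (ord1 i).
by case: (ord4_cases j) => ->.
Qed.

Lemma ev_neq0 (u : vec) i : ev u i != 0 -> u != 0.
Proof. by apply: contraNN => /eqP ->; rewrite /ev mxE. Qed.

Definition mkv (x0 x1 x2 x3 : R) : vec := \row_(j < 4) nth 0 [:: x0; x1; x2; x3] j.

Lemma ev_mkv (x0 x1 x2 x3 : R) :
  [/\ ev (mkv x0 x1 x2 x3) 0 = x0, ev (mkv x0 x1 x2 x3) 1 = x1,
      ev (mkv x0 x1 x2 x3) 2 = x2 & ev (mkv x0 x1 x2 x3) 3 = x3].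
Proof. by rewrite /ev !mxE !inordK. Qed.

Definition skew6_fun (a b c d e f : R) (i j : nat) : R :=
  match i, j with
  | 0, 1 => a | 1, 0 => - a | 0, 2 => b | 2, 0 => - b | 0, 3 => c | 3, 0 => - c
  | 1, 2 => d | 2, 1 => - d | 1, 3 => e | 3, 1 => - e | 2, 3 => f | 3, 2 => - f
  | _, _ => 0 end.
Arguments skew6_fun a b c d e f i%_N j%_N.

Definition skew6 a b c d e f : 'M[R]_4 := \matrix_(i < 4, j < 4) skew6_fun a b c d e f i j.

Lemma skew6E a b c d e f i j : (i < 4)%N -> (j < 4)%N ->
  skew6 a b c d e f (inord i) (inord j) = skew6_fun a b c d e f i j.
Proof. by move=> Hi Hj; rewrite mxE !inordK. Qed.

Lemma skew_coords (A : 'M[R]_4) : A^T = - A ->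
  A = skew6 (en A 0 1) (en A 0 2) (en A 0 3) (en A 1 2) (en A 1 3) (en A 2 3).
Proof.
move=> HA.
have T i j : A j i = - A i j by have := congr1 (fun M : 'M[R]_4 => M i j) HA; rewrite !mxE.
have D i : A i i = 0.
  by apply/eqP; rewrite -[_ == 0](mulrn_eq0 _ 2) mulr2n {2}T subrr.
apply/matrixP => i j; rewrite mxE.
by case: (ord4_cases i) => ->; case: (ord4_cases j) => ->; rewrite !inordK //= /en ?D // T.
Qed.

Lemma trmx_skew6 a b c d e f : (skew6 a b c d e f)^T = - skew6 a b c d e f.
Proof.
apply/matrixP => i j; rewrite !mxE.
by case: (ord4_cases i) => ->; case: (ord4_cases j) => ->; rewrite !inordK //=; ring.
Qed.

Lemma skew_congr (P A : 'M[R]_4) : A^T = - A -> (P *m A *m P^T)^T = - (P *m A *m P^T).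
Proof. by move=> HA; rewrite !trmx_mul trmxK HA mulNmx mulmxN mulmxA. Qed.

End Coordinates.

Section Pfaffian.
Variable R : rcfType.
Notation vec := 'rV[R]_4.
Implicit Types (A B P : 'M[R]_4) (a b c d e f : R).

Definition pfaff A := en A 0 1 * en A 2 3 - en A 0 2 * en A 1 3 + en A 0 3 * en A 1 2.

Definition pfaff_polar A B :=
  en A 0 1 * en B 2 3 + en A 2 3 * en B 0 1 - en A 0 2 * en B 1 3 - en A 1 3 * en B 0 2
  + en A 0 3 * en B 1 2 + en A 1 2 * en B 0 3.

Lemma pfaff_skew6 a b c d e f : pfaff (skew6 a b c d e f) = a * f - b * e + c * d.
Proof. by rewrite /pfaff /en !skew6E. Qed.

Lemma pfaff_polar_skew6 a b c d e f (a' b' c' d' e' f' : R) :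
  pfaff_polar (skew6 a b c d e f) (skew6 a' b' c' d' e' f') =
  a * f' + f * a' - b * e' - e * b' + c * d' + d * c'.
Proof. by rewrite /pfaff_polar /en !skew6E. Qed.

Lemma pfaffD A B : pfaff (A + B) = pfaff A + pfaff B + pfaff_polar A B.
Proof. by rewrite /pfaff /pfaff_polar /en !mxE; ring. Qed.

Lemma pfaffZ (t : R) A : pfaff (t *: A) = t ^+ 2 * pfaff A.
Proof. by rewrite /pfaff /en !mxE; ring. Qed.

Lemma pfaff_polarC A B : pfaff_polar A B = pfaff_polar B A.
Proof. by rewrite /pfaff_polar; ring. Qed.

Lemma pfaff_polarZr A B (t : R) : pfaff_polar A (t *: B) = t * pfaff_polar A B.
Proof. by rewrite /pfaff_polar /en !mxE; ring. Qed.

Lemma det_skew A : A^T = - A -> \det A = pfaff A ^+ 2.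
Proof.
by move=> /skew_coords ->; rewrite det4 det_mx4 pfaff_skew6 /en !skew6E //=; ring.
Qed.

Lemma pfaff_congr P A : A^T = - A -> pfaff (P *m A *m P^T) = \det P * pfaff A.
Proof.
move=> /skew_coords ->; rewrite det4 det_mx4 /pfaff !en_mul !en_tr /en !skew6E //=.
by ring.
Qed.

Lemma pfaff_polar_congr P A B : A^T = - A -> B^T = - B ->
  pfaff_polar (P *m A *m P^T) (P *m B *m P^T) = \det P * pfaff_polar A B.
Proof.
move=> HA HB; have HAB : (A + B)^T = - (A + B) by rewrite linearD /= HA HB opprD.
have := pfaff_congr P HAB; rewrite mulmxDr mulmxDl !pfaffD pfaff_congr // pfaff_congr //.
by move=> E; apply: (addrI (\det P * pfaff A + \det P * pfaff B)); rewrite E; ring.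
Qed.

Definition levi_civita (a b c d : nat) : R :=
  match a, b, c, d with
  | 0, 1, 2, 3 => 1 | 0, 1, 3, 2 => -1 | 0, 2, 1, 3 => -1
  | 0, 2, 3, 1 => 1 | 0, 3, 1, 2 => 1 | 0, 3, 2, 1 => -1
  | 1, 0, 2, 3 => -1 | 1, 0, 3, 2 => 1 | 1, 2, 0, 3 => 1
  | 1, 2, 3, 0 => -1 | 1, 3, 0, 2 => -1 | 1, 3, 2, 0 => 1
  | 2, 0, 1, 3 => 1 | 2, 0, 3, 1 => -1 | 2, 1, 0, 3 => -1
  | 2, 1, 3, 0 => 1 | 2, 3, 0, 1 => 1 | 2, 3, 1, 0 => -1
  | 3, 0, 1, 2 => -1 | 3, 0, 2, 1 => 1 | 3, 1, 0, 2 => 1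
  | 3, 1, 2, 0 => -1 | 3, 2, 0, 1 => -1 | 3, 2, 1, 0 => 1
  | _, _, _, _ => 0 end.

Definition eps4 (i j k l : 'I_4) : R :=
  \det (\matrix_(r < 4, s < 4) (quad i j k l r == s)%:R).

Lemma eps4_inord (a b c d : nat) : (a < 4)%N -> (b < 4)%N -> (c < 4)%N -> (d < 4)%N ->
  eps4 (inord a) (inord b) (inord c) (inord d) = levi_civita a b c d.
Proof.
move=> Ha Hb Hc Hd; rewrite /eps4 det4 det_mx4 /en !mxE /quad !inordK //= !inord4_eq //.
case: a Ha => [|[|[|[|a]]]] Ha //; case: b Hb => [|[|[|[|b]]]] Hb //;
case: c Hc => [|[|[|[|c]]]] Hc //; case: d Hd => [|[|[|[|d]]]] Hd //=; ring.
Qed.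

Lemma vol_ebasis (m : R) i j k l :
  vol m (quad (ebasis R i) (ebasis R j) (ebasis R k) (ebasis R l)) = m * eps4 i j k l.
Proof.
rewrite /vol /eps4; congr (_ * \det _); apply/matrixP => r s; rewrite !mxE.
by case: r => [[|[|[|[|?]]]] ?] //; rewrite /quad /= /ebasis mxE eqxx eq_sym.
Qed.

Lemma vol_ebasis_std (m : R) : vol m (ebasis R) = m.
Proof.
rewrite /vol -[RHS]mulr1; congr (_ * _); rewrite -[RHS](@det1 R 4).
by congr (\det _); apply/matrixP => i j; rewrite !mxE eqxx eq_sym.
Qed.

Lemma Phi_skew (m : R) U : U^T = - U -> Phi m U U = 2%:R * m * pfaff U.
Proof.
move=> /skew_coords ->; rewrite /Phi sum4 !sum4_cond !inordK //= ?sum4 ?sum4_cond ?inordK //=.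
by rewrite !vol_ebasis !eps4_inord // pfaff_skew6 /en !skew6E //=; ring.
Qed.

Lemma form2_ebasis A i j : form2 A (ebasis R i) (ebasis R j) = A i j.
Proof.
rewrite /form2 (bigD1 i) //= [X in _ + X]big1 => [|k Hk]; last first.
  by rewrite big1 // => l _; rewrite !mxE (negbTE Hk) !mul0r.
rewrite addr0 (bigD1 j) //= big1 => [|l Hl]; last by rewrite !mxE (negbTE Hl) mulr0 mul0r.
by rewrite !mxE !eqxx /= !mul1r addr0.
Qed.

Lemma sum_perm4 (G : 'I_4 -> 'I_4 -> 'I_4 -> 'I_4 -> R) :
  \sum_(s : 'S_4) (-1) ^+ s * G (s (inord 0)) (s (inord 1)) (s (inord 2)) (s (inord 3))
  = \sum_(a < 4) \sum_(b < 4) \sum_(c < 4) \sum_(d < 4) eps4 a b c d * G a b c d.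
Proof.
have sum_delta (x : 'I_4) (H : 'I_4 -> R) : \sum_(i < 4) (i == x)%:R * H i = H x.
  by rewrite (bigD1 x) //= eqxx mul1r big1 ?addr0 // => i /negbTE ->; rewrite mul0r.
have E (s : 'S_4) : G (s (inord 0)) (s (inord 1)) (s (inord 2)) (s (inord 3)) =
  \sum_(a < 4) \sum_(b < 4) \sum_(c < 4) \sum_(d < 4)
    (\prod_(r < 4) (quad a b c d r == s r)%:R) * G a b c d.
  have P (a b c d : 'I_4) : \prod_(r < 4) ((quad a b c d r == s r)%:R : R) =
    (d == s (inord 3))%:R * ((c == s (inord 2))%:R * ((b == s (inord 1))%:R * (a == s (inord 0))%:R)).
    rewrite !big_ord_recl big_ord0 mulr1.
    have -> : (lift ord0 (lift ord0 (lift ord0 ord0)) : 'I_4) = inord 3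
      by apply/val_inj; rewrite /= inordK.
    have -> : (lift ord0 (lift ord0 ord0) : 'I_4) = inord 2 by apply/val_inj; rewrite /= inordK.
    have -> : (lift ord0 ord0 : 'I_4) = inord 1 by apply/val_inj; rewrite /= inordK.
    have -> : (ord0 : 'I_4) = inord 0 by apply/val_inj; rewrite /= inordK.
    by rewrite /quad !inordK //=; ring.
  under eq_bigr => a _ do under eq_bigr => b _ do under eq_bigr => c _ do
    under eq_bigr => d _ do rewrite P -!mulrA.
  under eq_bigr => a _ do under eq_bigr => b _ do under eq_bigr => c _ do rewrite sum_delta.
  under eq_bigr => a _ do under eq_bigr => b _ do rewrite sum_delta.
  under eq_bigr => a _ do rewrite sum_delta.
  by rewrite sum_delta.
under eq_bigr => s _ do (rewrite E mulr_sumr; under eq_bigr => a _ do (rewrite mulr_sumr;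
  under eq_bigr => b _ do (rewrite mulr_sumr; under eq_bigr => c _ do rewrite mulr_sumr))).
rewrite exchange_big; apply: eq_bigr => a _.
rewrite exchange_big; apply: eq_bigr => b _.
rewrite exchange_big; apply: eq_bigr => c _.
rewrite exchange_big; apply: eq_bigr => d _.
rewrite /eps4 /determinant big_distrl; apply: eq_bigr => s _.
by rewrite mulrA; congr (_ * _ * _); apply: eq_bigr => r _; rewrite mxE.
Qed.

Lemma wedge22_ebasis A : A^T = - A -> wedge22 A A (ebasis R) = 2%:R * pfaff A.
Proof.
move=> /skew_coords ->; rewrite /wedge22.
under eq_bigr => s _ do rewrite !form2_ebasis -mulrA.
rewrite (sum_perm4 (fun i j k l => skew6 _ _ _ _ _ _ i j * skew6 _ _ _ _ _ _ k l)).
by rewrite !sum4 !eps4_inord // pfaff_skew6 /en !skew6E //=; field.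
Qed.

End Pfaffian.

Section Forms.
Variable R : rcfType.
Notation vec := 'rV[R]_4.
Implicit Types (A B P : 'M[R]_4) (x y z : vec).

Lemma form2M A x y : form2 A x y = (x *m A *m y^T) 0 0.
Proof.
rewrite /form2 !mxE; under [RHS]eq_bigr do rewrite !mxE big_distrl.
rewrite exchange_big; apply: eq_bigr => i _; apply: eq_bigr => j _.
by rewrite /= mulrAC.
Qed.

Lemma form2_expand A x y : form2 A x y =
  let f i j := ev x i * ev y j * en A i j in
  f 0 0 + f 0 1 + f 0 2 + f 0 3 + (f 1 0 + f 1 1 + f 1 2 + f 1 3) +
  (f 2 0 + f 2 1 + f 2 2 + f 2 3) + (f 3 0 + f 3 1 + f 3 2 + f 3 3).
Proof. by rewrite /form2 !sum4. Qed.

Lemma form2_congr A P x y : form2 A (x *m P) (y *m P) = form2 (P *m A *m P^T) x y.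
Proof. by rewrite !form2M trmx_mul !mulmxA. Qed.

Lemma form2_skew A x y : A^T = - A -> form2 A x y = - form2 A y x.
Proof.
move=> HA; rewrite !form2M.
have -> : (x *m A *m y^T) 0 0 = ((x *m A *m y^T)^T) 0 0 by rewrite [RHS]mxE.
by rewrite !trmx_mul trmxK HA mulNmx mulmxN mxE mulmxA.
Qed.

Lemma form2_alt A x : A^T = - A -> form2 A x x = 0.
Proof.
by move=> HA; apply/eqP; rewrite -[_ == 0](mulrn_eq0 _ 2) mulr2n {1}form2_skew // addNr.
Qed.

Lemma form2Nl A x y : form2 A (- x) y = - form2 A x y.
Proof. by rewrite !form2M !mulNmx mxE. Qed.

Lemma form2Nr A x y : form2 A x (- y) = - form2 A x y.
Proof. by rewrite !form2M linearN /= mulmxN mxE. Qed.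

Lemma form2_lin A B (t : R) x y : form2 (t *: A + B) x y = t * form2 A x y + form2 B x y.
Proof. by rewrite !form2M mulmxDr mulmxDl -scalemxAr -scalemxAl !mxE. Qed.

Lemma closed2_lin c A B (t : R) : closed2 c A -> closed2 c B -> closed2 c (t *: A + B).
Proof.
move=> [HA dA] [HB dB]; split=> [|x y z].
  by rewrite /is_2form linearD linearZ /= HA HB scalerN opprD.
have := dA x y z; have := dB x y z; rewrite /d2 !form2_lin.
nra.
Qed.

Lemma closed2_0 c : closed2 c (0 : 'M[R]_4).
Proof.
split=> [|x y z]; first by rewrite /is_2form trmx0 oppr0.
by rewrite /d2 !form2M !mulmx0 !mul0mx !mxE; ring.
Qed.

Lemma tamed_nondeg A J : tamed A J -> nondeg A.
Proof.
move=> H x Hx; apply/eqP; apply: contraT => hx.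
by have := H x hx; rewrite Hx ltxx.
Qed.

Definition dot x y := (x *m y^T) 0 0.

Lemma dotC x y : dot x y = dot y x.
Proof.
have -> : dot x y = ((x *m y^T)^T) 0 0 by rewrite mxE.
by rewrite trmx_mul trmxK.
Qed.

Lemma dotDr x y z : dot x (y + z) = dot x y + dot x z.
Proof. by rewrite /dot linearD /= mulmxDr mxE. Qed.

Lemma dotZr x y (t : R) : dot x (t *: y) = t * dot x y.
Proof. by rewrite /dot linearZ /= -scalemxAr mxE. Qed.

Lemma dot_gt0 x : x != 0 -> 0 < dot x x.
Proof.
move=> Hx; have -> : dot x x = \sum_(j < 4) x 0 j ^+ 2.
  by rewrite /dot mxE; apply: eq_bigr => j _; rewrite mxE expr2.
rewrite lt0r sumr_ge0 ?andbT => [|j _]; last exact: sqr_ge0.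
rewrite psumr_eq0 => [|j _]; last exact: sqr_ge0.
apply: contra Hx => /allP H; apply/eqP/matrixP => i j; rewrite (ord1 i) mxE.
by apply/eqP; rewrite -sqrf_eq0; apply: H; rewrite mem_index_enum.
Qed.

Lemma dot_expand x y :
  dot x y = ev x 0 * ev y 0 + ev x 1 * ev y 1 + ev x 2 * ev y 2 + ev x 3 * ev y 3.
Proof. by rewrite /dot mxE sum4 /ev !mxE. Qed.

Lemma form2_dot A x y : form2 A x y = dot (x *m A) y.
Proof. exact: form2M. Qed.

End Forms.

Section StandardStructure.
Variable R : rcfType.
Notation vec := 'rV[R]_4.
Implicit Types (A J P : 'M[R]_4) (a b c d e f : R).

Lemma en_scalar (t : R) i j : (i < 4)%N -> (j < 4)%N ->
  en (t *: 1%:M : 'M[R]_4) i j = if i == j then t else 0.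
Proof. by move=> Hi Hj; rewrite /en !mxE inord4_eq //; case: (i == j); rewrite ?mulr1 ?mulr0. Qed.

(* The complex structure e0 |-> e1, e2 |-> e3 (acting on row vectors). *)
Definition J0 : 'M[R]_4 := skew6 1 0 0 0 0 1.

Definition J_invariant A J := forall v w : vec, form2 A (v *m J) (w *m J) = form2 A v w.

Lemma J0_sqr : J0 *m J0 = - 1%:M.
Proof.
rewrite -scaleN1r; apply: mx4_entrywise => -[|[|[|[|i]]]] -[|[|[|[|j]]]] //= _ _.
all: by rewrite en_mul en_scalar // /en !skew6E //=; ring.
Qed.

Lemma ebasis_J0 : [/\ ebasis R (inord 0) *m J0 = ebasis R (inord 1),
  ebasis R (inord 1) *m J0 = - ebasis R (inord 0),
  ebasis R (inord 2) *m J0 = ebasis R (inord 3) &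
  ebasis R (inord 3) *m J0 = - ebasis R (inord 2)].
Proof.
split; apply/matrixP => i j; rewrite (ord1 i); case: (ord4_cases j) => ->;
  rewrite !mxE sum4 /J0 !skew6E // !mxE !inord4_eq //=; ring.
Qed.

Definition tame_quad a b c d e f (u : vec) :=
  a * (ev u 0 ^+ 2 + ev u 1 ^+ 2) + f * (ev u 2 ^+ 2 + ev u 3 ^+ 2)
  + (b + e) * (ev u 1 * ev u 2 - ev u 0 * ev u 3)
  + (c - d) * (ev u 0 * ev u 2 + ev u 1 * ev u 3).

Lemma form2_J0 a b c d e f u : form2 (skew6 a b c d e f) u (u *m J0) = tame_quad a b c d e f u.
Proof. by rewrite form2_expand /= !ev_mul /J0 /tame_quad /en !skew6E //=; ring. Qed.

Lemma tamed_J0_coef a b c d e f : tamed (skew6 a b c d e f) J0 ->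
  [/\ 0 < a, 0 < f & (b + e) ^+ 2 + (c - d) ^+ 2 < 4%:R * a * f].
Proof.
move=> H; have {}H u : u != 0 -> 0 < tame_quad a b c d e f u by move/H; rewrite form2_J0.
have tq x0 x1 x2 x3 : tame_quad a b c d e f (mkv x0 x1 x2 x3) =
  a * (x0 ^+ 2 + x1 ^+ 2) + f * (x2 ^+ 2 + x3 ^+ 2)
  + (b + e) * (x1 * x2 - x0 * x3) + (c - d) * (x0 * x2 + x1 * x3).
  by rewrite /tame_quad; case: (ev_mkv x0 x1 x2 x3) => -> -> -> ->.
have pos x0 x1 x2 x3 i : ev (mkv x0 x1 x2 x3) i != 0 -> 0 < tame_quad a b c d e f (mkv x0 x1 x2 x3).
  by move=> /ev_neq0; apply: H.
have Ha : 0 < a.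
  have := pos 1 0 0 0 0%N; rewrite tq; case: (ev_mkv (1 : R) 0 0 0) => -> _ _ _.
  by rewrite oner_eq0 => /(_ isT); rewrite !expr2; lra.
have Hf : 0 < f.
  have := pos 0 0 1 0 2%N; rewrite tq; case: (ev_mkv (0 : R) 0 1 0) => _ _ -> _.
  by rewrite oner_eq0 => /(_ isT); rewrite !expr2; lra.
split=> //.
have f2 : 2%:R * f != 0 by rewrite mulf_neq0 // ?pnatr_eq0 // gt_eqF.
have := pos (2%:R * f) 0 (- (c - d)) (b + e) 0%N; rewrite tq.
case: (ev_mkv (2%:R * f) 0 (- (c - d)) (b + e)) => -> _ _ _ /(_ f2) Hp.
suff : 0 < f * (4%:R * a * f - ((b + e) ^+ 2 + (c - d) ^+ 2)) by rewrite pmulr_rgt0 // subr_gt0.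
by move: Hp; congr (0 < _); ring.
Qed.

Lemma tamed_J0_skew6 a b c d e f : 0 < a -> (b + e) ^+ 2 + (c - d) ^+ 2 < 4%:R * a * f ->
  tamed (skew6 a b c d e f) J0.
Proof.
move=> Ha Hd u Hu; rewrite form2_J0.
set x := (b + e) / 2%:R; set y := (c - d) / 2%:R.
set u0 := ev u 0; set u1 := ev u 1; set u2 := ev u 2; set u3 := ev u 3.
set D := a * f - x ^+ 2 - y ^+ 2.
(* Completing the square in (u0, u1). *)
have E : a * tame_quad a b c d e f u =
    (a * u0 - x * u3 + y * u2) ^+ 2 + (a * u1 + x * u2 + y * u3) ^+ 2 + D * (u2 ^+ 2 + u3 ^+ 2).
  by rewrite /tame_quad /D /x /y -/u0 -/u1 -/u2 -/u3; field; rewrite ?pnatr_eq0.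
have HD : 0 < D.
  have -> : D = (4%:R * a * f - ((b + e) ^+ 2 + (c - d) ^+ 2)) / 4%:R.
    by rewrite /D /x /y; field; rewrite ?pnatr_eq0.
  by rewrite divr_gt0 ?subr_gt0 ?ltr0n.
rewrite -(pmulr_rgt0 _ Ha) E.
have s1 := sqr_ge0 (a * u0 - x * u3 + y * u2); have s2 := sqr_ge0 (a * u1 + x * u2 + y * u3).
have s3 := sqr_ge0 u2; have s4 := sqr_ge0 u3.
have [u23|] := boolP (0 < u2 ^+ 2 + u3 ^+ 2); first by have := mulr_gt0 HD u23; lra.
rewrite -leNgt => u23.
have e2 : u2 = 0 by apply/eqP; rewrite -sqrf_eq0; apply/eqP; lra.
have e3 : u3 = 0 by apply/eqP; rewrite -sqrf_eq0; apply/eqP; lra.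
rewrite e2 e3 !(mulr0, addr0, subr0, expr0n) /= ?(addr0, mulr0).
rewrite lt_def addr_ge0 ?sqr_ge0 // andbT paddr_eq0 ?sqr_ge0 // !sqrf_eq0 !mulf_eq0 (gt_eqF Ha) /=.
apply: contra Hu => /andP [/eqP e0 /eqP e1]; exact/eqP/ev_eq0.
Qed.

Lemma J0_invariant_coef a b c d e f : J_invariant (skew6 a b c d e f) J0 -> b = e /\ c = - d.
Proof.
move=> H; have := H (mkv 1 0 0 0) (mkv 0 0 1 0); have := H (mkv 1 0 0 0) (mkv 0 0 0 1).
rewrite !form2_expand /= !ev_mul /J0 /en !skew6E //=.
case: (ev_mkv (1 : R) 0 0 0) => -> -> -> ->.
case: (ev_mkv (0 : R) 0 1 0) => -> -> -> ->.
case: (ev_mkv (0 : R) 0 0 1) => -> -> -> ->.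
by move=> ? ?; split; lra.
Qed.

Lemma J0_invariant_skew6 a b c d e f : b = e -> c = - d -> J_invariant (skew6 a b c d e f) J0.
Proof. by move=> -> -> v w; rewrite !form2_expand /= !ev_mul /J0 /en !skew6E //=; ring. Qed.

Section Conjugation.
Variables (J P : 'M[R]_4).
Hypothesis P_unit : P \in unitmx.
Hypothesis PJ : P *m J = J0 *m P.

Lemma mulmx_conjJ0 (x : vec) : x *m invmx P *m J0 *m P = x *m J.
Proof. by rewrite -mulmxA -PJ mulmxA mulmxKV. Qed.

Lemma tamed_conj A : tamed A J <-> tamed (P *m A *m P^T) J0.
Proof.
have P_free : row_free P by rewrite row_free_unit.
split=> H u Hu.
  have := H (u *m P); rewrite mulmx_free_eq0 // => /(_ Hu).
  by rewrite -mulmxA PJ mulmxA form2_congr.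
have := H (u *m invmx P); rewrite mulmx_free_eq0 ?row_free_unit ?unitmx_inv // => /(_ Hu).
by rewrite -form2_congr !mulmxKV // mulmx_conjJ0.
Qed.

Lemma J_invariant_conj A : J_invariant A J <-> J_invariant (P *m A *m P^T) J0.
Proof.
split=> H v w; first by rewrite -!form2_congr -!mulmxA -PJ !mulmxA H.
by have := H (v *m invmx P) (w *m invmx P); rewrite -!form2_congr !mulmxKV // !mulmx_conjJ0.
Qed.

End Conjugation.

End StandardStructure.
Arguments J0 {R}.

Section Hodge.
Variable R : rcfType.
Implicit Types (A B U P : 'M[R]_4) (a b c d e f : R).

Definition hodge U :=
  skew6 (en U 2 3) (- en U 1 3) (en U 1 2) (en U 0 3) (- en U 0 2) (en U 0 1).

Lemma hodge_skew6 a b c d e f : hodge (skew6 a b c d e f) = skew6 f (- e) d c (- b) a.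
Proof. by rewrite /hodge /en !skew6E. Qed.

Lemma trmx_hodge U : (hodge U)^T = - hodge U.
Proof. exact: trmx_skew6. Qed.

Lemma skew6D a b c d e f (a' b' c' d' e' f' : R) :
  skew6 a b c d e f + skew6 a' b' c' d' e' f'
  = skew6 (a + a') (b + b') (c + c') (d + d') (e + e') (f + f').
Proof. by apply: mx4_entrywise => -[|[|[|[|i]]]] -[|[|[|[|j]]]] //= _ _; rewrite /en !mxE !inordK //=; ring. Qed.

Lemma skew6Z (t : R) a b c d e f :
  t *: skew6 a b c d e f = skew6 (t * a) (t * b) (t * c) (t * d) (t * e) (t * f).
Proof. by apply: mx4_entrywise => -[|[|[|[|i]]]] -[|[|[|[|j]]]] //= _ _; rewrite /en !mxE !inordK //=; ring. Qed.

Lemma skew6N a b c d e f : - skew6 a b c d e f = skew6 (- a) (- b) (- c) (- d) (- e) (- f).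
Proof. by apply: mx4_entrywise => -[|[|[|[|i]]]] -[|[|[|[|j]]]] //= _ _; rewrite /en !mxE !inordK //=; ring. Qed.

Lemma mul_hodge A : A^T = - A -> A *m hodge A = - pfaff A *: 1%:M.
Proof.
move=> /skew_coords ->; rewrite hodge_skew6 pfaff_skew6.
by apply: mx4_entrywise => -[|[|[|[|i]]]] -[|[|[|[|j]]]] //= _ _;
  rewrite en_mul en_scalar // /en !skew6E //=; ring.
Qed.

Lemma hodge_mul A : A^T = - A -> hodge A *m A = - pfaff A *: 1%:M.
Proof.
move=> /skew_coords ->; rewrite hodge_skew6 pfaff_skew6.
by apply: mx4_entrywise => -[|[|[|[|i]]]] -[|[|[|[|j]]]] //= _ _;
  rewrite en_mul en_scalar // /en !skew6E //=; ring.
Qed.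

Lemma mul_hodge_polar A B : A^T = - A -> B^T = - B ->
  A *m hodge B + B *m hodge A = - pfaff_polar A B *: 1%:M.
Proof.
move=> /skew_coords -> /skew_coords ->; rewrite !hodge_skew6 pfaff_polar_skew6.
by apply: mx4_entrywise => -[|[|[|[|i]]]] -[|[|[|[|j]]]] //= _ _;
  rewrite [en (_ + _) _ _]mxE -!/(en _ _ _) !en_mul en_scalar // /en !skew6E //=; ring.
Qed.

Lemma pfaff_hodge U : U^T = - U -> pfaff (hodge U) = pfaff U.
Proof. by move=> /skew_coords ->; rewrite hodge_skew6 !pfaff_skew6; ring. Qed.

Lemma pair2_skew6 a b c d e f (a' b' c' d' e' f' : R) :
  pair2 (skew6 a b c d e f) (skew6 a' b' c' d' e' f') =
  a * a' + b * b' + c * c' + d * d' + e * e' + f * f'.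
Proof. by rewrite /pair2 sum4 !sum4_cond !inordK //= !skew6E //=; ring. Qed.

Lemma pair2_hodge A U : A^T = - A -> U^T = - U -> pair2 A U = pfaff_polar A (hodge U).
Proof.
by move=> /skew_coords -> /skew_coords ->; rewrite hodge_skew6 pair2_skew6 pfaff_polar_skew6; ring.
Qed.

Lemma pair2_congr P A U : A^T = - A -> U^T = - U ->
  pair2 A (P^T *m U *m P) = pair2 (P *m A *m P^T) U.
Proof.
move=> /skew_coords -> /skew_coords ->.
rewrite /pair2 sum4 !sum4_cond !inordK //= ?sum4 ?sum4_cond ?inordK //=.
by rewrite -!/(en _ _ _) !en_mul !en_tr /en !skew6E //=; ring.
Qed.

End Hodge.

Section PairNormalForm.
Variable R : rcfType.
Notation vec := 'rV[R]_4.
Variables S T : 'M[R]_4.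
Hypotheses (S_skew : S^T = - S) (T_skew : T^T = - T).
Hypotheses (pfaffS_neq0 : pfaff S != 0) (pfaffT : pfaff T = pfaff S).
Hypothesis polarST : pfaff_polar S T = 0.
Implicit Types x y : vec.

(* [K] is the endomorphism with [T = K S]; the polar condition makes it a
   complex structure, skew for [S]. *)
Let K := - (pfaff S)^-1 *: (T *m hodge S).

Let S_inj : injective (mulmx^~ S : vec -> vec).
Proof. by apply: row_free_inj; rewrite row_free_unit unitmxE unitfE det_skew // expf_neq0. Qed.

Let T_hodgeS : T *m hodge S = - (S *m hodge T).
Proof.
have := mul_hodge_polar T_skew S_skew; rewrite pfaff_polarC polarST oppr0 scale0r.
by move/eqP; rewrite addr_eq0 => /eqP.
Qed.

Let trK : K^T = - (pfaff S)^-1 *: (hodge S *m T).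
Proof. by rewrite /K linearZ /= trmx_mul trmx_hodge T_skew mulmxN mulNmx opprK. Qed.

Let KS : K *m S = T.
Proof.
rewrite /K -scalemxAl -mulmxA hodge_mul // -scalemxAr mulmx1.
by rewrite scalerA mulrN mulNr opprK mulVf // scale1r.
Qed.

Let S_trK : S *m K^T = T.
Proof.
rewrite trK -scalemxAr mulmxA mul_hodge // -scalemxAl mul1mx.
by rewrite scalerA mulrN mulNr opprK mulVf // scale1r.
Qed.

Let T_trK : T *m K^T = - S.
Proof.
rewrite trK -scalemxAr mulmxA T_hodgeS mulNmx -mulmxA hodge_mul // pfaffT.
by rewrite -scalemxAr mulmx1 scalerN scalerA mulrN mulNr opprK mulVf // scale1r.
Qed.

Let KT : K *m T = - S.
Proof. by rewrite -T_trK trK /K -scalemxAl -scalemxAr mulmxA. Qed.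

Let KK x : x *m K *m K = - x.
Proof. by apply: S_inj; rewrite /= -!mulmxA KS KT mulmxN mulNmx. Qed.

Let S_KK x y : form2 S (x *m K) (y *m K) = - form2 S x y.
Proof. by rewrite !form2M trmx_mul !mulmxA -(mulmxA x K S) KS -(mulmxA x T) T_trK mulmxN mulNmx mxE. Qed.

Let S_xK x y : form2 S x (y *m K) = form2 T x y.
Proof. by rewrite !form2M trmx_mul mulmxA -(mulmxA x S) S_trK. Qed.

Let S_Kx x y : form2 S (x *m K) y = form2 T x y.
Proof. by rewrite !form2M -(mulmxA x K S) KS. Qed.

(* A symplectic basis (v, w, vK, -wK): [w] solves S(v, w) = 1, S(vK, w) = 0,
   obtained by projecting [v S] orthogonally to [v T]. *)
Let v : vec := ebasis R (inord 0).
Let r1 := v *m S.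
Let r2 := v *m T.
Let wv := r1 - (dot r2 r1 / dot r2 r2) *: r2.
Let w := (dot wv wv)^-1 *: wv.

Let v_neq0 : v != 0.
Proof. by apply: (@ev_neq0 _ _ 0); rewrite /ev /v mxE !eqxx /= oner_eq0. Qed.

Let r2_wv : dot r2 wv = 0.
Proof.
rewrite /wv -scaleNr dotDr dotZr mulNr.
have [r20|r2n0] := eqVneq r2 0; first by rewrite r20 /dot !mul0mx !mxE mulr0 subrr.
by have /lt0r_neq0 r2r2 := dot_gt0 r2n0; rewrite divfK ?subrr.
Qed.

Let wv_neq0 : wv != 0.
Proof.
apply/negP; rewrite /wv subr_eq0; set t := dot r2 r1 / dot r2 r2 => /eqP E.
have vKv : v = t *: (v *m K) by apply: S_inj; rewrite /= -scalemxAl -mulmxA KS.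
have vK : v *m K = - t *: v by rewrite {1}vKv -scalemxAl KK scalerN scaleNr.
have : (1 + t ^+ 2) *: v = 0.
  by rewrite scalerDl scale1r {1}vKv vK scalerA mulrN -expr2 scaleNr addNr.
have t2 : 0 < 1 + t ^+ 2 by have := sqr_ge0 t; lra.
by move/eqP; rewrite scaler_eq0 gt_eqF //= (negbTE v_neq0).
Qed.

Let r1_wv : dot r1 wv = dot wv wv.
Proof.
have -> : r1 = wv + (dot r2 r1 / dot r2 r2) *: r2 by rewrite /wv subrK.
by rewrite [LHS]dotC dotDr dotZr [dot wv r2]dotC r2_wv mulr0 addr0.
Qed.

Let S_vw : form2 S v w = 1.
Proof.
have /lt0r_neq0 wv2 := dot_gt0 wv_neq0.
by rewrite form2_dot -/r1 /w dotZr r1_wv mulVf.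
Qed.

Let S_Kvw : form2 S (v *m K) w = 0.
Proof. by rewrite S_Kx form2_dot -/r2 /w dotZr r2_wv mulr0. Qed.

Let frame := quad v w (v *m K) (- (w *m K)).
Let G : 'M[R]_4 := \matrix_(i < 4, j < 4) frame i 0 j.

Let G_congr A i j : (G *m A *m G^T) i j = form2 A (frame i) (frame j).
Proof.
rewrite form2M !mxE; apply: eq_bigr => k _; rewrite !mxE; congr (_ * _).
by apply: eq_bigr => l _; rewrite !mxE.
Qed.

Let GSG : G *m S *m G^T = skew6 1 0 0 0 0 1.
Proof.
rewrite (skew_coords (skew_congr G S_skew)) /en !G_congr /frame /quad !inordK //=.
congr skew6.
- exact: S_vw.
- by rewrite S_xK form2_alt.
- by rewrite form2Nr S_xK -S_Kx S_Kvw oppr0.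
- by rewrite S_xK form2_skew // -S_Kx S_Kvw oppr0.
- by rewrite form2Nr S_xK form2_alt // oppr0.
- by rewrite form2Nr S_KK opprK S_vw.
Qed.

Let GTG : G *m T *m G^T = skew6 0 0 1 1 0 0.
Proof.
rewrite (skew_coords (skew_congr G T_skew)) /en !G_congr /frame /quad !inordK //=.
congr skew6.
- by rewrite -S_Kx S_Kvw.
- by rewrite -S_Kx form2_alt.
- by rewrite form2Nr -S_Kx S_KK opprK S_vw.
- by rewrite -S_Kx S_KK (form2_skew _ _ S_skew) opprK S_vw.
- by rewrite form2Nr -S_Kx form2_alt // oppr0.
- by rewrite form2Nr -S_Kx KK form2Nl opprK S_xK -S_Kx S_Kvw.
Qed.

Lemma skew_pair_normal_form : exists G : 'M[R]_4,
  [/\ G *m S *m G^T = skew6 1 0 0 0 0 1, G *m T *m G^T = skew6 0 0 1 1 0 0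
    & \det G * pfaff S = 1].
Proof.
exists G; split; [exact: GSG | exact: GTG |].
by have := pfaff_congr G S_skew; rewrite GSG pfaff_skew6 => <-; ring.
Qed.

End PairNormalForm.

Section Forward.
Variable R : rcfType.
Notation vec := 'rV[R]_4.
Implicit Types (b w A G W : 'M[R]_4).

Lemma mul_conjJ0 G : G \in unitmx -> G *m (invmx G *m J0 *m G) = J0 *m G.
Proof. by move=> Gu; rewrite !mulmxA mulmxV // mul1mx. Qed.

Lemma acs_conjJ0 G : G \in unitmx -> acs (invmx G *m J0 *m G).
Proof.
move=> Gu.
by rewrite /acs !mulmxA mulmxK // -(mulmxA _ J0 J0) J0_sqr mulmxN mulmx1 mulNmx mulVmx.
Qed.

Lemma quad_rows G :
  \matrix_(i < 4, j < 4) quad (row (inord 0) G) (row (inord 1) G) (row (inord 2) G)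
     (row (inord 3) G) i 0 j = G.
Proof.
apply/matrixP => i j; rewrite mxE.
by case: (ord4_cases i) => ->; rewrite /quad inordK //= mxE.
Qed.

Lemma orient_conjJ0 (m : R) G : G \in unitmx -> 0 < m * \det G ->
  induces_orient m (invmx G *m J0 *m G).
Proof.
move=> Gu mG; exists (row (inord 0) G), (row (inord 2) G).
have rowJ i : row i G *m (invmx G *m J0 *m G) = ebasis R i *m J0 *m G.
  by rewrite rowE -mulmxA mul_conjJ0 // mulmxA.
have [E0 _ E2 _] := ebasis_J0 R.
by rewrite !rowJ E0 E2 -!rowE /vol quad_rows -unitfE -unitmxE.
Qed.

Lemma pfaff_rescale w b : 0 < pfaff b / pfaff w ->
  exists2 t : R, 0 < t & pfaff (t *: b) = pfaff w.
Proof.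
move=> q_gt0; have pb : pfaff b != 0 by apply: contraTneq q_gt0 => ->; rewrite mul0r ltxx.
exists (Num.sqrt (pfaff b / pfaff w))^-1; first by rewrite invr_gt0 sqrtr_gt0.
by rewrite pfaffZ exprVn sqr_sqrtr ?ltW // invf_div divfK.
Qed.

Lemma pfaff_sum_diff w b : pfaff b = pfaff w -> pfaff_polar w b = 0 ->
  [/\ pfaff (w + b) = 2%:R * pfaff w, pfaff (w - b) = pfaff (w + b)
    & pfaff_polar (w + b) (w - b) = 0].
Proof.
move=> pb pwb.
have -> : pfaff (w + b) = pfaff w + pfaff b + pfaff_polar w b by exact: pfaffD.
have -> : pfaff (w - b) = pfaff w + pfaff b - pfaff_polar w b.
  by rewrite /pfaff /pfaff_polar /en !mxE; ring.
have -> : pfaff_polar (w + b) (w - b) = 2%:R * (pfaff w - pfaff b).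
  by rewrite /pfaff /pfaff_polar /en !mxE; ring.
by rewrite pb pwb subrr mulr0; split=> //; ring.
Qed.

Lemma compatible_J0_polar_gt0 W : W^T = - W -> tamed W J0 -> J_invariant W J0 ->
  0 < pfaff_polar W (skew6 1 0 (-1) (-1) 0 1).
Proof.
move=> /skew_coords ->; set a := en W 0 1; set f := en W 2 3 => tam.
move=> /J0_invariant_coef [-> ->].
have [a_gt0 f_gt0 _] := tamed_J0_coef tam.
by rewrite pfaff_polar_skew6; lra.
Qed.

(* The Hodge dual of a boundary 2-vector is Pfaffian-orthogonal to all closed forms. *)
Lemma B2_hodge_rescaled c (m : R) w U : B2 c U -> 0 < m * pfaff w -> 0 < m * pfaff U ->
  exists b : 'M[R]_4,
    [/\ b^T = - b, pfaff b = pfaff w & forall W, closed2 c W -> pfaff_polar W b = 0].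
Proof.
move=> [U_skew U_ann] mw mU.
have [t t_gt0 pfaff_b] : exists2 t : R, 0 < t & pfaff (t *: hodge U) = pfaff w.
  apply: pfaff_rescale; rewrite pfaff_hodge //.
  have m_neq0 : m != 0 by apply: contraTneq mw => ->; rewrite mul0r ltxx.
  have w_neq0 : pfaff w != 0 by apply: contraTneq mw => ->; rewrite mulr0 ltxx.
  have -> : pfaff U / pfaff w = (m * pfaff U) / (m * pfaff w) by field; apply/andP.
  exact: divr_gt0.
exists (t *: hodge U); split=> // [|W W_cl]; first by rewrite linearZ /= trmx_hodge scalerN.
by rewrite pfaff_polarZr -pair2_hodge ?U_ann ?mulr0 //; case: W_cl.
Qed.

Lemma tame_compatible_B2_nonpos c (m : R) (w U : 'M[R]_4) :
  symplectic c w -> 0 < m * pfaff w -> tame_compatible c m -> B2 c U -> m * pfaff U <= 0.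
Proof.
move=> w_sympl mw TC U_B2; rewrite leNgt; apply/negP => mU.
have w_skew : w^T = - w by case: w_sympl => [[]].
have [b [b_skew pfaff_b polar_b]] := B2_hodge_rescaled U_B2 mw mU.
have [pS pT pST] := pfaff_sum_diff pfaff_b (polar_b w (proj1 w_sympl)).
have S_skew : (w + b)^T = - (w + b) by rewrite linearD /= w_skew b_skew opprD.
have T_skew : (w - b)^T = - (w - b) by rewrite linearD linearN /= w_skew b_skew opprD opprK.
have pS_neq0 : pfaff (w + b) != 0.
  by rewrite pS mulf_neq0 ?pnatr_eq0 //; apply: contraTneq mw => ->; rewrite mulr0 ltxx.
have [G [GS GT dG]] := skew_pair_normal_form S_skew T_skew pS_neq0 pT pST.
have Gu : G \in unitmx.
  by rewrite unitmxE unitfE; apply/eqP => d0; move: dG; rewrite d0 mul0r => /eqP; rewrite eq_sym oner_eq0.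
have GJ := mul_conjJ0 Gu.
have half_sum (X Y : 'M[R]_4) : G *m (2%:R^-1 *: (X + Y)) *m G^T = 2%:R^-1 *: (G *m X *m G^T + G *m Y *m G^T).
  by rewrite -scalemxAr -scalemxAl mulmxDr mulmxDl.
have w_half : w = 2%:R^-1 *: ((w + b) + (w - b)).
  by apply/matrixP => i j; rewrite !mxE; field.
have b_half : b = 2%:R^-1 *: ((w + b) + - (w - b)).
  by apply/matrixP => i j; rewrite !mxE; field.
have w_tamed : tamed w (invmx G *m J0 *m G).
  apply/(tamed_conj Gu GJ); rewrite w_half half_sum GS GT skew6D skew6Z.
  by apply: tamed_J0_skew6; rewrite ?addr0 ?add0r ?mulr0 ?mulr1 ?subrr; lra.
have orient : induces_orient m (invmx G *m J0 *m G).
  apply: orient_conjJ0 => //; rewrite -(pmulr_lgt0 _ (_ : 0 < pfaff (w + b) ^+ 2)).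
    by rewrite expr2 mulrA -(mulrA m) dG mulr1 pS mulrCA pmulr_rgt0 ?ltr0n.
  by rewrite exprn_even_gt0.
have [W [W_sympl [W_tamed W_inv]]] := TC _ (acs_conjJ0 Gu) orient (ex_intro _ w (conj w_sympl w_tamed)).
have W_skew : W^T = - W by case: W_sympl => [[]].
have := compatible_J0_polar_gt0 (skew_congr G W_skew) (proj1 (tamed_conj Gu GJ W) W_tamed)
  (proj1 (J_invariant_conj Gu GJ W) W_inv).
have := pfaff_polar_congr G W_skew b_skew; rewrite polar_b ?mulr0; last by case: W_sympl.
rewrite b_half half_sum mulmxN mulNmx GS GT skew6N skew6D pfaff_polarZr !oppr0 !addr0 !add0r.
by move/eqP; rewrite mulf_eq0 invr_eq0 pnatr_eq0 /= => /eqP ->; rewrite ltxx.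
Qed.

End Forward.

Section Subspace.
Variable R : rcfType.
Notation vec := 'rV[R]_4.
Variable SS : vec -> Prop.
Hypothesis SS0 : SS 0.
Hypothesis SS_lin : forall x y (t : R), SS x -> SS y -> SS (t *: x + y).

Let SSD x y : SS x -> SS y -> SS (x + y).
Proof. by move=> hx hy; rewrite -[x]scale1r; apply: SS_lin. Qed.

Let SSZ x (t : R) : SS x -> SS (t *: x).
Proof. by move=> hx; rewrite -[_ *: _]addr0; apply: SS_lin. Qed.

Let SS_sub n (M : 'M[R]_(n, 4)) (v : vec) : (forall i, SS (row i M)) -> (v <= M)%MS -> SS v.
Proof.
move=> gM /submxP [D ->]; rewrite mulmx_sum_row.
by apply: (big_ind SS) => // i _; apply: SSZ.
Qed.

Lemma subspace_rowspace : exists M : 'M[R]_4, forall v, SS v <-> (v <= M)%MS.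
Proof.
suff H k (M : 'M[R]_4) : (forall i, SS (row i M)) -> (4 - \rank M <= k)%N ->
    exists M' : 'M[R]_4, forall v, SS v <-> (v <= M')%MS.
  by apply: (H 4%N 0) => [i|]; rewrite ?row0 ?mxrank0.
elim: k M => [|k IH] M gM hk.
  exists M => v; split=> [_|]; last exact: SS_sub.
  by apply: submx_full; rewrite /row_full eqn_leq rank_leq_col /=; lia.
have [[v [Sv nvM]]|Hn] := classic (exists v : vec, SS v /\ ~~ (v <= M)%MS); last first.
  exists M => v; split=> [Sv|]; last exact: SS_sub.
  by apply/negPn/negP => nv; apply: Hn; exists v.
have gv i : SS (row i v).
  by rewrite (_ : row i v = v) //; apply/matrixP => a b; rewrite !mxE (ord1 a) (ord1 i).
have gM2 i : SS (row i (M + v)%MS).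
  have /sub_addsmxP [u ->] := row_sub i (M + v)%MS.
  by apply: SSD; [exact: SS_sub gM (submxMl _ _) | exact: SS_sub gv (submxMl _ _)].
have rank_lt : (\rank M < \rank (M + v)%MS)%N.
  have nM2M : ~~ (M + v <= M)%MS by apply: contra nvM => /(submx_trans (addsmxSr M v)).
  by have := mxrank_leqif_sup (addsmxSl M v); move/leqifP; rewrite (negbTE nM2M).
by apply: (IH _ gM2); have := rank_leq_col (M + v)%MS; lia.
Qed.

End Subspace.

Section KernelCombination.
Variables (R : rcfType) (T : lmodType R).
Variable Z : T -> Prop.
Hypothesis Z_lin : forall x y (t : R), Z x -> Z y -> Z (t *: x + y).
Variables L p r : T -> R.
Hypothesis L_lin : forall x y t, L (t *: x + y) = t * L x + L y.
Hypothesis p_lin : forall x y t, p (t *: x + y) = t * p x + p y.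
Hypothesis r_lin : forall x y t, r (t *: x + y) = t * r x + r y.
Hypothesis L_ker : forall x, Z x -> p x = 0 -> r x = 0 -> L x = 0.

Let L_comb x1 x2 x (a b : R) : Z x1 -> Z x2 -> Z x ->
  p x = a * p x1 + b * p x2 -> r x = a * r x1 + b * r x2 -> L x = a * L x1 + b * L x2.
Proof.
move=> Z1 Z2 Z0 hp hr; pose y := (- a) *: x1 + ((- b) *: x2 + x).
have : L y = 0.
  apply: L_ker; first by apply: Z_lin => //; apply: Z_lin.
    by rewrite /y !p_lin hp; ring.
  by rewrite /y !r_lin hr; ring.
by rewrite /y !L_lin => E; apply/eqP; rewrite -subr_eq0; apply/eqP; rewrite -E; ring.
Qed.

Lemma kernel_lin_comb : exists g1 g2 : R, forall x, Z x -> L x + p x * g1 + r x * g2 = 0.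
Proof.
have [[x1 [x2 [Z1 Z2 D]]]|Hn] :=
  classic (exists x1 x2, [/\ Z x1, Z x2 & p x1 * r x2 - p x2 * r x1 != 0]).
  set d := p x1 * r x2 - p x2 * r x1 in D.
  exists ((- L x1 * r x2 + L x2 * r x1) / d), ((- L x2 * p x1 + L x1 * p x2) / d) => x Zx.
  rewrite (@L_comb x1 x2 x ((p x * r x2 - r x * p x2) / d) ((p x1 * r x - r x1 * p x) / d)) //.
  - by rewrite /d; field.
  - by rewrite /d; field.
  - by rewrite /d; field.
have dep x1 x2 : Z x1 -> Z x2 -> p x1 * r x2 - p x2 * r x1 = 0.
  by move=> Z1 Z2; apply/eqP; apply: contraT => h; case: Hn; exists x1, x2.
have [[x1 [Z1 N]]|Hn2] := classic (exists x1, Z x1 /\ p x1 ^+ 2 + r x1 ^+ 2 != 0).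
  set n1 := p x1 ^+ 2 + r x1 ^+ 2 in N.
  exists (- L x1 * p x1 / n1), (- L x1 * r x1 / n1) => x Zx.
  have dd := dep x x1 Zx Z1; set t := (p x * p x1 + r x * r x1) / n1.
  have hp : p x = t * p x1 + 0 * p x1.
    apply/eqP; rewrite -subr_eq0; apply/eqP.
    transitivity (r x1 / n1 * (p x * r x1 - p x1 * r x)); last by rewrite dd mulr0.
    by rewrite /t /n1; field.
  have hr : r x = t * r x1 + 0 * r x1.
    apply/eqP; rewrite -subr_eq0; apply/eqP.
    transitivity (- p x1 / n1 * (p x * r x1 - p x1 * r x)); last by rewrite dd mulr0.
    by rewrite /t /n1; field.
  by rewrite (@L_comb x1 x1 x t 0) // /t /n1; field.
exists 0, 0 => x Zx; rewrite !mulr0 !addr0.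
have E : p x ^+ 2 + r x ^+ 2 = 0 by apply/eqP; apply: contraT => h; case: Hn2; exists x.
have := sqr_ge0 (p x); have := sqr_ge0 (r x) => r2 p2.
by apply: L_ker => //; apply/eqP; rewrite -sqrf_eq0; apply/eqP; lra.
Qed.

End KernelCombination.

Section LorentzCone.
Variable R : rcfType.
Notation vec := 'rV[R]_4.
Implicit Types (s x y n : vec).

(* The quadratic form [4 s0 s1 - s2^2 - s3^2] of signature (1, 3); its positive
   cone with [s0 > 0] is the set of coefficient vectors [(a, f, b + e, c - d)] of
   forms tamed by [J0] (see [tamed_J0_coef]). *)
Definition lorentz s := 4%:R * ev s 0 * ev s 1 - ev s 2 ^+ 2 - ev s 3 ^+ 2.
Definition lorentz_polar s t :=
  2%:R * (ev s 0 * ev t 1 + ev s 1 * ev t 0) - ev s 2 * ev t 2 - ev s 3 * ev t 3.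

Lemma lorentzDZ x y (t : R) :
  lorentz (x + t *: y) = lorentz x + 2%:R * t * lorentz_polar x y + t ^+ 2 * lorentz y.
Proof. by rewrite /lorentz /lorentz_polar !evD !evZ; ring. Qed.

Lemma lorentz_polarC x y : lorentz_polar x y = lorentz_polar y x.
Proof. by rewrite /lorentz_polar; ring. Qed.

Lemma lorentz_polarxx x : lorentz_polar x x = lorentz x.
Proof. by rewrite /lorentz_polar /lorentz; ring. Qed.

Definition lorentz_gram : 'M[R]_4 := \matrix_(i < 4, j < 4)
  match nat_of_ord i, nat_of_ord j with
  | 0, 1 | 1, 0 => 2%:R | 2, 2 | 3, 3 => -1 | _, _ => 0 end.

Lemma lorentz_polar_form2 x y : lorentz_polar x y = form2 lorentz_gram x y.
Proof. by rewrite form2_expand /= /en !mxE !inordK //= /lorentz_polar; ring. Qed.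

Lemma lorentz_gram_unit : lorentz_gram \in unitmx.
Proof.
rewrite unitmxE unitfE det4 det_mx4 /en !mxE !inordK //=.
by rewrite (_ : _ - _ = - 4%:R); [rewrite oppr_eq0 pnatr_eq0 | ring].
Qed.

Lemma ev_lorentz_gram n :
  [/\ ev (n *m lorentz_gram) 0 = 2%:R * ev n 1, ev (n *m lorentz_gram) 1 = 2%:R * ev n 0,
      ev (n *m lorentz_gram) 2 = - ev n 2 & ev (n *m lorentz_gram) 3 = - ev n 3].
Proof. by rewrite !ev_mul /en !mxE !inordK //=; split; ring. Qed.

Definition in_tame_cone (s : vec) :=
  0 < ev s 0 /\ ev s 2 ^+ 2 + ev s 3 ^+ 2 < 4%:R * ev s 0 * ev s 1.

Definition in_dual_cone (b : vec) :=
  [/\ 0 <= ev b 0, 0 <= ev b 1 & ev b 2 ^+ 2 + ev b 3 ^+ 2 <= ev b 0 * ev b 1].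

Lemma causal_dual_cone n : 0 <= lorentz n ->
  in_dual_cone (n *m lorentz_gram) \/ in_dual_cone (- (n *m lorentz_gram)).
Proof.
rewrite /lorentz /in_dual_cone !evN; case: (ev_lorentz_gram n) => -> -> -> -> Hn.
have := sqr_ge0 (ev n 2); have := sqr_ge0 (ev n 3).
by have [s0|s0] := lerP 0 (ev n 0 + ev n 1); [left | right]; split; nra.
Qed.

Lemma dual_cone_pairing_gt0 (s b : vec) : in_tame_cone s -> in_dual_cone b -> b != 0 ->
  0 < dot s b.
Proof.
rewrite dot_expand => -[a_gt0 disc] [b0_ge0 b1_ge0 bq] b_neq0.
move: a_gt0 disc b0_ge0 b1_ge0 bq b_neq0.
have -> : b != 0 = [|| ev b 0 != 0, ev b 1 != 0, ev b 2 != 0 | ev b 3 != 0].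
  apply/idP/idP => [|/or4P[]/ev_neq0 //]; apply: contraNT; rewrite !negb_or !negbK.
  by case/and4P => /eqP ? /eqP ? /eqP ? /eqP ?; apply/eqP/ev_eq0.
move: (ev s 0) (ev s 1) (ev s 2) (ev s 3) (ev b 0) (ev b 1) (ev b 2) (ev b 3).
move=> a f X Y b0 b1 b2 b3 a_gt0 disc b0_ge0 b1_ge0 bq b_neq0.
have := sqr_ge0 X; have := sqr_ge0 Y; have := sqr_ge0 b2; have := sqr_ge0 b3 => b32 b22 Y2 X2.
have f_gt0 : 0 < f by nra.
have [b01|] := boolP (0 < b0 * b1); last first.
  rewrite -leNgt => b01.
  have b2_0 : b2 = 0 by apply/eqP; rewrite -sqrf_eq0; apply/eqP; nra.
  have b3_0 : b3 = 0 by apply/eqP; rewrite -sqrf_eq0; apply/eqP; nra.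
  move: b_neq0; rewrite b2_0 b3_0 eqxx !orbF !mulr0 !addr0.
  by case/orP => nz; [have : 0 < b0 by rewrite lt_def nz | have : 0 < b1 by rewrite lt_def nz]; nra.
have CS : (X * b2 + Y * b3) ^+ 2 <= (X ^+ 2 + Y ^+ 2) * (b2 ^+ 2 + b3 ^+ 2).
  by have := sqr_ge0 (X * b3 - Y * b2); nra.
have AM : 4%:R * a * f * (b0 * b1) <= (a * b0 + f * b1) ^+ 2.
  by have := sqr_ge0 (a * b0 - f * b1); nra.
have lt_sq : (X * b2 + Y * b3) ^+ 2 < (a * b0 + f * b1) ^+ 2 by nra.
have : 0 < a * b0 + f * b1 by nra.
nra.
Qed.

End LorentzCone.
Arguments lorentz_gram {R}.

Section ConeSeparation.
Variable R : rcfType.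
Notation vec := 'rV[R]_4.
Implicit Types (s n : vec).
Variable SS : vec -> Prop.
Hypothesis SS0 : SS 0.
Hypothesis SS_lin : forall x y (t : R), SS x -> SS y -> SS (t *: x + y).
Hypothesis SS_cone : forall s, SS s -> ~ in_tame_cone s.

Let lorentz_nonpos s : SS s -> lorentz s <= 0.
Proof.
move=> Ss; rewrite leNgt; apply/negP => Hq; rewrite /lorentz in Hq.
have := sqr_ge0 (ev s 2); have := sqr_ge0 (ev s 3) => h3 h2.
have [s0_lt0|s0_gt0|s0_eq0] := ltgtP (ev s 0) 0.
- apply: (SS_cone (_ : SS ((-1) *: s))); first by rewrite -[_ *: s]addr0; apply: SS_lin.
  by rewrite /in_tame_cone !evZ; split; nra.
- by apply: (SS_cone Ss); split=> //; lra.
- by move: Hq; rewrite s0_eq0 mulr0 mul0r; lra.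
Qed.

(* A null vector of SS is Lorentz-orthogonal to SS: otherwise moving from it
   along a suitable direction of SS would make the form positive. *)
Let null_orthogonal n : SS n -> lorentz n = 0 -> forall s, SS s -> lorentz_polar n s = 0.
Proof.
move=> Sn Qn s Ss; apply/eqP; apply: contraT => hb.
set q := lorentz s; set b := lorentz_polar n s.
have hq : q <= 0 by exact: lorentz_nonpos.
have h1q : 0 < 1 - q by lra.
have := lorentz_nonpos (SS_lin (b / (1 - q)) Ss Sn).
rewrite addrC lorentzDZ Qn add0r -/b -/q.
have -> : 2%:R * (b / (1 - q)) * b + (b / (1 - q)) ^+ 2 * q = b ^+ 2 * (2%:R - q) / (1 - q) ^+ 2.
  by field; rewrite gt_eqF.
move=> Hle; suff : 0 < b ^+ 2 * (2%:R - q) / (1 - q) ^+ 2 by rewrite ltNge Hle.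
rewrite divr_gt0 ?exprn_gt0 // mulr_gt0 //; last by lra.
by rewrite lt_def sqrf_eq0 hb sqr_ge0.
Qed.

(* When SS is negative definite, the Lorentz-orthogonal complement of SS is a
   complement of SS, so it contains the component of a timelike vector. *)
Let timelike_orthogonal : (forall n, SS n -> n != 0 -> lorentz n < 0) ->
  exists2 k : vec, k != 0 & 0 < lorentz k /\ forall s, SS s -> lorentz_polar k s = 0.
Proof.
move=> Hneg.
have [M HM] := subspace_rowspace SS0 SS_lin.
pose Kb := kermx (lorentz_gram *m M^T).
have HK k : (k <= Kb)%MS -> forall s, SS s -> lorentz_polar k s = 0.
  move=> /sub_kermxP Hk s /HM /submxP [D ->].
  by rewrite lorentz_polar_form2 form2M trmx_mul mulmxA -(mulmxA k) Hk mul0mx mxE.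
have cap0 : (M :&: Kb)%MS = 0.
  apply/row_matrixP => i; rewrite row0.
  have /andP[h1 h2] : (row i (M :&: Kb)%MS <= M)%MS && (row i (M :&: Kb)%MS <= Kb)%MS.
    by rewrite -sub_capmx row_sub.
  set v := row i _ in h1 h2 *; have Sv : SS v by apply/HM.
  have := HK v h2 v Sv; rewrite lorentz_polarxx => Qv.
  by apply/eqP; apply: contraT => /(Hneg v Sv); rewrite Qv ltxx.
have rk : \rank (M + Kb)%MS = 4%N.
  rewrite mxrank_disjoint_sum // mxrank_ker.
  have -> : \rank (lorentz_gram *m M^T) = \rank M.
    rewrite -mxrank_tr trmx_mul trmxK mxrankMfree //.
    by rewrite row_free_unit unitmx_tr lorentz_gram_unit.
  by have := rank_leq_col M; lia.
pose e : vec := mkv 1 1 0 0.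
have : (e <= (M + Kb)%MS)%MS by apply: submx_full; rewrite /row_full rk.
case/sub_addsmxP => [[u1 u2] /= Ee].
have Ss : SS (u1 *m M) by apply/HM; exact: submxMl.
have Bsk : lorentz_polar (u1 *m M) (u2 *m Kb) = 0 by rewrite lorentz_polarC; apply: HK => //; exact: submxMl.
have Qe : lorentz e = 4%:R by rewrite /lorentz; case: (ev_mkv (1 : R) 1 0 0) => -> -> -> ->; ring.
have := lorentzDZ (u1 *m M) (u2 *m Kb) 1; rewrite scale1r -Ee Bsk Qe.
have := lorentz_nonpos Ss => Qs Qsk.
have Qk : 0 < lorentz (u2 *m Kb) by lra.
exists (u2 *m Kb); last by split=> //; apply: HK; exact: submxMl.
by apply/eqP => k0; move: Qk; rewrite k0 /lorentz /ev !mxE !expr2; lra.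
Qed.

Lemma cone_separation : exists b : vec,
  [/\ b != 0, in_dual_cone b & forall s, SS s -> dot s b = 0].
Proof.
have [n n_neq0 [Qn Hn]] : exists2 n : vec, n != 0 & 0 <= lorentz n /\ forall s, SS s -> lorentz_polar n s = 0.
  have [[n [Sn nn Qn]]|Hn] := classic (exists n, [/\ SS n, n != 0 & lorentz n = 0]).
    by exists n => //; split; [rewrite Qn | exact: null_orthogonal].
  suff /timelike_orthogonal [k kn [Qk Hk]] : forall n, SS n -> n != 0 -> lorentz n < 0.
    by exists k => //; split=> //; exact: ltW.
  move=> n Sn nn; rewrite lt_neqAle lorentz_nonpos // andbT.
  by apply/eqP => Qn; apply: Hn; exists n.
have nG_neq0 : n *m lorentz_gram != 0.
  by rewrite mulmx_free_eq0 ?row_free_unit ?lorentz_gram_unit.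
have orth s : SS s -> dot s (n *m lorentz_gram) = 0.
  by move=> Ss; rewrite dotC -form2_dot -lorentz_polar_form2 Hn.
case: (causal_dual_cone Qn) => [Hb|Hb]; [exists (n *m lorentz_gram) | exists (- (n *m lorentz_gram))].
  by split.
split=> //; first by rewrite oppr_eq0.
by move=> s Ss; rewrite -scaleN1r dotZr orth ?mulr0.
Qed.

End ConeSeparation.

Section Backward.
Variable R : rcfType.
Notation vec := 'rV[R]_4.

Lemma adapted_frame (m : R) J : acs J -> induces_orient m J ->
  exists P : 'M[R]_4, [/\ P \in unitmx, P *m J = J0 *m P & 0 < m * \det P].
Proof.
move=> J_acs [v1 [v2]] /=.
set P := \matrix_(i < 4, j < 4) quad v1 (v1 *m J) v2 (v2 *m J) i 0 j => [[dP mP]].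
exists P; split=> //; first by rewrite unitmxE unitfE.
have rowP i : row i P = quad v1 (v1 *m J) v2 (v2 *m J) i.
  by apply/matrixP => k j; rewrite !mxE (ord1 k).
have [E0 E1 E2 E3] := ebasis_J0 R.
apply/row_matrixP => i; rewrite !row_mul [row i J0]rowE.
case: (ord4_cases i) => ->; rewrite ?E0 ?E1 ?E2 ?E3 ?mulNmx -?rowE !rowP /quad !inordK //=.
all: by rewrite -mulmxA J_acs mulmxN mulmx1.
Qed.

Section AdaptedFrame.
Variables (c : 'I_4 -> 'I_4 -> 'I_4 -> R) (m : R) (J P : 'M[R]_4).
Hypotheses (P_unit : P \in unitmx) (PJ : P *m J = J0 *m P) (mP : 0 < m * \det P).

Let co (A : 'M[R]_4) i j := en (P *m A *m P^T) i j.

(* In the adapted frame, A = skew6 a b c d e f is tamed by J iff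
   [tame_coefs A = (a, f, b + e, c - d)] lies in the tame cone, and it is
   J-invariant iff its two defects [b - e] and [c + d] vanish. *)
Let tame_coefs A := mkv (co A 0 1) (co A 2 3) (co A 0 2 + co A 1 3) (co A 0 3 - co A 1 2).
Let defect1 A := co A 0 2 - co A 1 3.
Let defect2 A := co A 0 3 + co A 1 2.

Let co_lin A B (t : R) i j : co (t *: A + B) i j = t * co A i j + co B i j.
Proof. by rewrite /co mulmxDr mulmxDl -scalemxAr -scalemxAl /en !mxE. Qed.

Let defect1_lin A B (t : R) : defect1 (t *: A + B) = t * defect1 A + defect1 B.
Proof. by rewrite /defect1 !co_lin; ring. Qed.

Let defect2_lin A B (t : R) : defect2 (t *: A + B) = t * defect2 A + defect2 B.
Proof. by rewrite /defect2 !co_lin; ring. Qed.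

Let tame_coefs_lin A B (t : R) : tame_coefs (t *: A + B) = t *: tame_coefs A + tame_coefs B.
Proof.
apply/matrixP => i j; rewrite /tame_coefs !mxE.
by case: (ord4_cases j) => ->; rewrite !inordK //= !co_lin; ring.
Qed.

Let ev_tame_coefs A :
  [/\ ev (tame_coefs A) 0 = co A 0 1, ev (tame_coefs A) 1 = co A 2 3,
      ev (tame_coefs A) 2 = co A 0 2 + co A 1 3 & ev (tame_coefs A) 3 = co A 0 3 - co A 1 2].
Proof. exact: ev_mkv. Qed.

Let coords A : A^T = - A ->
  P *m A *m P^T = skew6 (co A 0 1) (co A 0 2) (co A 0 3) (co A 1 2) (co A 1 3) (co A 2 3).
Proof. by move=> A_skew; rewrite {1}(skew_coords (skew_congr P A_skew)). Qed.

Let tamed_cone A : A^T = - A -> tamed A J -> in_tame_cone (tame_coefs A).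
Proof.
move=> A_skew /(tamed_conj P_unit PJ); rewrite coords // /in_tame_cone.
by case/tamed_J0_coef; case: (ev_tame_coefs A) => -> -> -> ->.
Qed.

Section NoCompatible.
Hypothesis no_compat : ~ exists W, symplectic c W /\ compatible W J.

Let SS (s : vec) :=
  exists A, [/\ closed2 c A, defect1 A = 0, defect2 A = 0 & s = tame_coefs A].

Let SS_cone s : SS s -> ~ in_tame_cone s.
Proof.
move=> [A [A_cl d1 d2 ->]]; rewrite /in_tame_cone; case: (ev_tame_coefs A) => -> -> -> -> [a_gt0 disc].
have A_skew : A^T = - A by case: A_cl.
have A_tamed : tamed A J by apply/(tamed_conj P_unit PJ); rewrite coords //; exact: tamed_J0_skew6.
apply: no_compat; exists A; split; first by split=> //; exact: tamed_nondeg A_tamed.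
split=> //; apply/(J_invariant_conj P_unit PJ); rewrite coords //.
apply: J0_invariant_skew6; first by move/eqP: d1; rewrite /defect1 subr_eq0 => /eqP.
by move/eqP: d2; rewrite /defect2 addr_eq0 => /eqP.
Qed.

Lemma closed_forms_annihilator : exists b g1 g2, [/\ b != 0, in_dual_cone b &
  forall A, closed2 c A -> dot (tame_coefs A) b + defect1 A * g1 + defect2 A * g2 = 0].
Proof.
have SS0 : SS 0.
  exists 0; rewrite /tame_coefs /defect1 /defect2 /co !mulmx0 !mul0mx /en !mxE.
  split; [exact: closed2_0 | ring | ring |].
  by apply/matrixP => i j; rewrite !mxE; case: (ord4_cases j) => ->; rewrite !inordK //=; ring.
have SS_lin x y (t : R) : SS x -> SS y -> SS (t *: x + y).
  move=> [A1 [C1 h11 h12 ->]] [A2 [C2 h21 h22 ->]]; exists (t *: A1 + A2).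
  by rewrite defect1_lin defect2_lin tame_coefs_lin h11 h12 h21 h22 mulr0 addr0; split=> //; exact: closed2_lin.
have [b [b_neq0 b_dual b_orth]] := cone_separation SS0 SS_lin SS_cone.
have L_lin A B (t : R) :
    dot (tame_coefs (t *: A + B)) b = t * dot (tame_coefs A) b + dot (tame_coefs B) b.
  by rewrite tame_coefs_lin dotC dotDr dotZr !(dotC b).
have L_ker A : closed2 c A -> defect1 A = 0 -> defect2 A = 0 -> dot (tame_coefs A) b = 0.
  by move=> A_cl d1 d2; apply: b_orth; exists A.
have [g1 [g2 Hg]] := kernel_lin_comb (@closed2_lin _ c) L_lin defect1_lin defect2_lin L_ker.
by exists b, g1, g2.
Qed.

End NoCompatible.

Let boundary (b : vec) g1 g2 :=
  P^T *m skew6 (ev b 0) (ev b 2 + g1) (ev b 3 + g2) (g2 - ev b 3) (ev b 2 - g1) (ev b 1) *m P.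

Let boundary_skew b g1 g2 : (boundary b g1 g2)^T = - boundary b g1 g2.
Proof. by have := skew_congr P^T (trmx_skew6 _ _ _ _ _ _); rewrite trmxK /boundary. Qed.

Let pair2_boundary b g1 g2 A : A^T = - A ->
  pair2 A (boundary b g1 g2) = dot (tame_coefs A) b + defect1 A * g1 + defect2 A * g2.
Proof.
move=> A_skew; rewrite pair2_congr ?trmx_skew6 // coords // pair2_skew6 dot_expand.
by case: (ev_tame_coefs A) => -> -> -> ->; rewrite /defect1 /defect2; ring.
Qed.

Let Phi_boundary b g1 g2 : Phi m (boundary b g1 g2) (boundary b g1 g2) =
  2%:R * (m * \det P) * (ev b 0 * ev b 1 - ev b 2 ^+ 2 - ev b 3 ^+ 2 + g1 ^+ 2 + g2 ^+ 2).
Proof.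
rewrite Phi_skew ?boundary_skew // /boundary -{2}(trmxK P) pfaff_congr ?trmx_skew6 //.
by rewrite det_tr pfaff_skew6; ring.
Qed.

Lemma adapted_compatible om : closed2 c om -> tamed om J ->
  (forall U, B2 c U -> Phi m U U <= 0) -> exists W, symplectic c W /\ compatible W J.
Proof.
move=> om_cl om_tamed HB; apply: NNPP => no_compat.
have [b [g1 [g2 [b_neq0 b_dual Hg]]]] := closed_forms_annihilator no_compat.
have U_B2 : B2 c (boundary b g1 g2).
  split=> [|A A_cl]; first exact: boundary_skew.
  by rewrite pair2_boundary ?Hg //; case: A_cl.
have two_mP : 0 < 2%:R * (m * \det P) by rewrite mulr_gt0 ?ltr0n.
have := HB _ U_B2; rewrite Phi_boundary pmulr_rle0 //.
case: (b_dual) => _ _ bq; have := sqr_ge0 g1; have := sqr_ge0 g2 => g2_ge0 g1_ge0 Hle.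
have g1_0 : g1 = 0 by apply/eqP; rewrite -sqrf_eq0; apply/eqP; lra.
have g2_0 : g2 = 0 by apply/eqP; rewrite -sqrf_eq0; apply/eqP; lra.
have om_skew : om^T = - om by case: om_cl.
have := dual_cone_pairing_gt0 (tamed_cone om_skew om_tamed) b_dual b_neq0.
by have := Hg om om_cl; rewrite g1_0 g2_0 !mulr0 !addr0 => ->; rewrite ltxx.
Qed.

End AdaptedFrame.

Lemma B2_nonpos_tame_compatible c (m : R) :
  (forall U, B2 c U -> Phi m U U <= 0) -> tame_compatible c m.
Proof.
move=> HB J J_acs J_or [om [om_sympl om_tamed]].
have [P [P_unit PJ mP]] := adapted_frame J_acs J_or.
exact: (adapted_compatible P_unit PJ mP (proj1 om_sympl) om_tamed HB).
Qed.

End Backward.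

Unset Implicit Arguments.

Theorem theorem1 (R : rcfType) (c : 'I_4 -> 'I_4 -> 'I_4 -> R) (m : R) :
  is_lie c -> m != 0 ->
  (exists w : 'M[R]_4, symplectic c w /\
     exists k : R, 0 < k /\ forall v, wedge22 w w v = k * vol m v) ->
  (tame_compatible c m <-> forall U : 'M[R]_4, B2 c U -> Phi m U U <= 0).
Proof.
move=> _ m_neq0 [w [w_sympl [k [k_gt0 w_pos]]]].
split=> [TC U U_B2|]; last exact: B2_nonpos_tame_compatible.
have w_skew : w^T = - w by case: w_sympl => [[]].
have mw : 0 < m * pfaff w.
  have : 0 < m * (2%:R * pfaff w).
    by rewrite -wedge22_ebasis // w_pos vol_ebasis_std mulrCA mulr_gt0 // -expr2 exprn_even_gt0.
  by rewrite mulrCA pmulr_rgt0 ?ltr0n.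
rewrite Phi_skew; last by case: U_B2.
by rewrite -mulrA pmulr_rle0 ?ltr0n // (tame_compatible_B2_nonpos w_sympl mw TC U_B2).
Qed.
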